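(* For every MLL proof structure $\Theta$, every run of Algorithm A on input $\Theta$ terminates.
   Context: MLL formulas (with a single atom $p$) are given by $F ::= p \mid p^\bot \mid F\otimes G \mid F \wp G$, where $\wp$ denotes par. MLL links are: an ID-link, with two conclusions $p$ and $p^\bot$; a $\otimes$-link, with left premise $F$, right premise $G$ and conclusion $F\otimes G$; a $\wp$-link, with left premise $F$, right premise $G$ and conclusion $F\wp G$. An MLL proof structure $\Theta$ is a finite set of links such that each conclusion of a link is a premise of at most one other link of $\Theta$, and each premise of a link is a conclusion of exactly one other link; a conclusion of $\Theta$ is a formula occurrence that is not a premise of any link. Extreme-left DR-graph $S_{\forall\ell}(\Theta)$: the undirected graph on formula occurrences in which each ID-link joins its two conclusions, each $\otimes$-link joins its conclusion to both premises, and each $\wp$-link joins its conclusion to its left premise only. deNM-trees: finite trees with labeled nodes (carrying a label set of symbols $\ell_L$, $r_L$, $L$ a $\wp$-link) and $\wp$-nodes (labeled by a $\wp$-link $L$, of degree 1 or 2, with a port ''above'' and a port ''below''; a degree-1 $\wp$-node is attached only through its port above). Translation $T(\Theta)$ (undefined unless $S_{\forall\ell}(\Theta)$ is a tree). If $\Theta$ is a single ID-link, $T(\Theta)$ is one degree-0 labeled node with label set $\emptyset$. Otherwise each link $L$ gives a piece: (i) ID-link, case 1: one conclusion $F$ is the right premise of a $\wp$-link $L'$ or a conclusion of $\Theta$; if $F^\bot$ is a premise of a $\wp$-link, $T(\Theta)$ is undefined; otherwise a degree-1 labeled node attached to the piece of the link having $F^\bot$ as premise, labeled $\{r_{L'}\}$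 if $F$ is the right premise of $L'$ and $\emptyset$ otherwise. Case 2 (otherwise): if both conclusions are premises of $\wp$-links, undefined; otherwise a degree-2 labeled node attached to the pieces of the links having the conclusions as premises, labeled $\{\ell_{L'}\}$ if a conclusion is the left premise of a $\wp$-link $L'$, else $\emptyset$. (ii) $\otimes$-link, case 1 (conclusion is a conclusion of $\Theta$ or right premise of a $\wp$-link $L'$): a degree-2 labeled node attached to the pieces of the links producing its premises, labeled $\{r_{L'}\}$ or $\emptyset$ accordingly; case 2 (otherwise): a degree-3 labeled node attached additionally to the piece of the link having its conclusion as premise, labeled $\{\ell_{L'}\}$ if the conclusion is the left premise of a $\wp$-link $L'$, else $\emptyset$. (iii) $\wp$-link $L$: a $\wp$-node $n_L$ whose port above is attached to the piece of the link producing the left premise of $L$; case 1 (conclusion is the right premise of $\wp$-link $L'$): port below attached to a degree-1 labeled node labeled $\{r_{L'}\}$; case 2 (conclusion is the left premise of $\wp$-link $L'$): port below attached to a degree-2 labeled node labeled $\{\ell_{L'}\}$ which is attached to the port above of $n_{L'}$; case 3 (otherwise): only $n_L$, of degree 1 if its conclusion is a conclusion of $\Theta$, else its port below is attached to the piece of the link having its conclusion as premise. $T(\Theta)$ connects all pieces. Rewriting with one designated active labeled node: ($\wp$-elimination) if the active node $n$ is adjacent to a $\wp$-node $n_L$ through $n_L$'s port above and $n$'s label set contains $\ell_L$ and $r_L$, delete $n_L$ (its neighbour through the port below, if any, becomes adjacent to $n$); (union) if the active node is adjacent to a labeled node, merge them into one active node labeled by the union of label sets; (local jump) if the active node is adjacent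 to a $\wp$-node $n_L$ through $n_L$'s port below, the active node becomes the labeled node whose label set contains $r_L$ (tree unchanged). $S_{\rm full}$ is the set of all $\ell_L, r_L$ for $\wp$-links $L$ of $\Theta$. Algorithm A on input $\Theta$: (1) if $T(\Theta)$ is undefined, output no; (2) select an arbitrary labeled node as active; (3) rewrite using the three rules (in any order); (4) if local jump is applied to a $\wp$-node to which it was already applied, output no; (5) when no rule applies to the current tree $T'$, output yes if $T'$ is exactly one degree-0 node with label set $S_{\rm full}$, and no otherwise. *)

From mathcomp Require Import all_boot.

Set Implicit Arguments.
Unset Strict Implicit.
Unset Printing Implicit Defensive.

Inductive formula :=
  | Atom
  | NAtom
  | FTens of formula & formula
  | FPar  of formula & formula.

(* Formula occurrences are named by natural numbers.
   IdL a b    : ID-link with conclusions a (of formula p) and b (of p^bot)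
   TensL l r c: tensor-link with left premise l, right premise r, conclusion c
   ParL l r c : par-link with left premise l, right premise r, conclusion c *)
Inductive link :=
  | IdL of nat & nat
  | TensL of nat & nat & nat
  | ParL of nat & nat & nat.

Definition dflt_link := IdL 0 0.

Definition conclusions (L : link) : seq nat :=
  match L with IdL a b => [:: a; b] | TensL _ _ c => [:: c] | ParL _ _ c => [:: c] end.

Definition premises (L : link) : seq nat :=
  match L with IdL _ _ => [::] | TensL l r _ => [:: l; r] | ParL l r _ => [:: l; r] end.

(* A candidate proof structure: a finite family of links together with the
   formula carried by each occurrence. Links are identified by their index in
   [ps_links]. *)
Record pstruct := PS { ps_links : seq link ; ps_form : nat -> formula }.

Definition link_typed (f : nat -> formula) (L : link) : Prop :=
  match L with
  | IdL a b => f a = Atom /\ f b = NAtom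
  | TensL l r c => f c = FTens (f l) (f r)
  | ParL l r c => f c = FPar (f l) (f r)
  end.

Definition occs (ls : seq link) : seq nat := flatten (map conclusions ls).
Definition prems (ls : seq link) : seq nat := flatten (map premises ls).

(* MLL proof structure: every link is well typed; distinct conclusion slots
   are distinct occurrences (so each occurrence is the conclusion of exactly
   one link); distinct premise slots are distinct occurrences (so each
   occurrence is a premise of at most one link); every premise is the
   conclusion of some (necessarily other) link. *)
Definition is_pstruct (Th : pstruct) : Prop :=
  (forall i, i < size (ps_links Th) ->
      link_typed (ps_form Th) (nth dflt_link (ps_links Th) i))
  /\ uniq (occs (ps_links Th))
  /\ uniq (prems (ps_links Th))
  /\ {subset prems (ps_links Th) <= occs (ps_links Th)}.

(* The extreme-left DR-graph S_{forall l}(Theta) and the tree property. *)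
Definition dr_edges (ls : seq link) : seq (nat * nat) :=
  flatten [seq match L with
               | IdL a b => [:: (a, b)]
               | TensL l r c => [:: (c, l); (c, r)]
               | ParL l _ c => [:: (c, l)]
               end | L <- ls].

Definition adj_of (E : seq (nat * nat)) : rel nat :=
  fun x y => has (fun e => (e == (x, y)) || (e == (y, x))) E.

Definition is_tree (V : seq nat) (E : seq (nat * nat)) : Prop :=
  0 < size V /\
  size E = (size V).-1 /\
  (forall x y, x \in V -> y \in V ->
     exists p : seq nat, path (adj_of E) x p /\ last x p = y).

Definition S_is_tree (Th : pstruct) : Prop :=
  is_tree (occs (ps_links Th)) (dr_edges (ps_links Th)).

(* Symbols: (false, j) = l_L and (true, j) = r_L for the par-link L of index j.
   Endpoints of edges: (node id, port) with port None for a labeled node,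
   Some true = the port "above" and Some false = the port "below" of a
   par-node. *)
Definition sym := (bool * nat)%type.
Definition endpoint := (nat * option bool)%type.

Record detree := DT {
  labs   : seq (nat * seq sym);
  pnodes : seq (nat * nat);          (* par-nodes: id and par-link index *)
  tedges : seq (endpoint * endpoint) (* undirected edges *)
}.

Section Translation.
Variable ls : seq link.

Definition idx_opt (P : pred link) : option nat :=
  let j := find P ls in if j < size ls then Some j else None.

Definition parleft (x : nat) : option nat :=
  idx_opt (fun L => if L is ParL l _ _ then l == x else false).
Definition parright (x : nat) : option nat :=
  idx_opt (fun L => if L is ParL _ r _ then r == x else false).
Definition tensprem (x : nat) : option nat :=
  idx_opt (fun L => if L is TensL l r _ then (l == x) || (r == x) else false).
Definition is_parprem (x : nat) : bool := (parleft x != None) || (parright x != None).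
Definition is_concl (x : nat) : bool := x \notin prems ls.
Definition producer (x : nat) : nat := find (fun L => x \in conclusions L) ls.

Definition lab_of (x : nat) : seq sym :=
  match parleft x with
  | Some j => [:: (false, j)]
  | None => match parright x with Some j => [:: (true, j)] | None => [::] end
  end.

Definition id_case1 (a b : nat) : bool :=
  [|| parright a != None, is_concl a, parright b != None | is_concl b].
Definition id_F (a b : nat) : nat :=
  if (parright a != None) || is_concl a then a else b.
Definition id_Fbot (a b : nat) : nat :=
  if (parright a != None) || is_concl a then b else a.

Definition id_ok (L : link) : bool :=
  if L is IdL a b then
    (if id_case1 a b then ~~ is_parprem (id_Fbot a b)
     else ~~ (is_parprem a && is_parprem b))
  else true.

Definition id_label (a b : nat) : seq sym :=
  if id_case1 a b then lab_of (id_F a b) else lab_of a ++ lab_of b.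

(* node ids: link i gives node 2i (labeled node for ID/tensor-links, the
   par-node n_L for par-links); par-link i may give an extra labeled node 2i+1 *)
Definition node_labs (i : nat) (L : link) : seq (nat * seq sym) :=
  match L with
  | IdL a b => [:: (i.*2, id_label a b)]
  | TensL _ _ c => [:: (i.*2, lab_of c)]
  | ParL _ _ c =>
      if (parleft c != None) || (parright c != None)
      then [:: (i.*2.+1, lab_of c)] else [::]
  end.

Definition build_labs : seq (nat * seq sym) :=
  flatten [seq node_labs i (nth dflt_link ls i) | i <- iota 0 (size ls)].

Definition build_pnodes : seq (nat * nat) :=
  flatten [seq (if nth dflt_link ls i is ParL _ _ _ then [:: (i.*2, i)] else [::])
          | i <- iota 0 (size ls)].

(* edge created by the occurrence x when x is a premise of a tensor-link or
   the left premise of a par-link: it joins the piece producing x and the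
   piece consuming x *)
Definition consumer_ep (x : nat) : option endpoint :=
  match tensprem x with
  | Some j => Some (j.*2, None)
  | None => match parleft x with Some j => Some (j.*2, Some true) | None => None end
  end.

Definition producer_ep (x : nat) : endpoint :=
  let k := producer x in
  match nth dflt_link ls k with
  | ParL _ _ _ => if parleft x != None then (k.*2.+1, None) else (k.*2, Some false)
  | _ => (k.*2, None)
  end.

Definition occ_edges : seq (endpoint * endpoint) :=
  pmap (fun x => match consumer_ep x with
                 | Some ce => Some (producer_ep x, ce)
                 | None => None end) (occs ls).

Definition par_edges : seq (endpoint * endpoint) :=
  flatten [seq (match nth dflt_link ls i with
                | ParL _ _ c =>
                    if (parleft c != None) || (parright c != None)
                    then [:: ((i.*2, Some false), (i.*2.+1, None))] else [::]
                | _ => [::] end)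
          | i <- iota 0 (size ls)].

(* the translation, with the S-tree condition checked separately *)
Definition Tbuild : option detree :=
  match ls with
  | [:: IdL _ _] => Some (DT [:: (0, [::])] [::] [::])
  | _ => if all id_ok ls
         then Some (DT build_labs build_pnodes (occ_edges ++ par_edges))
         else None
  end.

End Translation.

Definition T_is (Th : pstruct) (t : detree) : Prop :=
  S_is_tree Th /\ Tbuild (ps_links Th) = Some t.

Definition lab_lookup (t : detree) (n : nat) : option (seq sym) :=
  let i := find (fun p => p.1 == n) (labs t) in
  if i < size (labs t) then Some (nth (0, [::]) (labs t) i).2 else None.

Definition par_lookup (t : detree) (m : nat) : option nat :=
  let i := find (fun p => p.1 == m) (pnodes t) in
  if i < size (pnodes t) then Some (nth (0, 0) (pnodes t) i).2 else None.

Definition joins (e : endpoint * endpoint) (u v : endpoint) : bool :=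
  (e == (u, v)) || (e == (v, u)).
Definition has_edge (t : detree) (u v : endpoint) : bool :=
  has (fun e => joins e u v) (tedges t).
Definition incident (u : endpoint) (e : endpoint * endpoint) : bool :=
  (e.1 == u) || (e.2 == u).
Definition rename_ep (old new p : endpoint) : endpoint := if p == old then new else p.
Definition rename_edge (old new : endpoint) (e : endpoint * endpoint) :=
  (rename_ep old new e.1, rename_ep old new e.2).

(* states of Algorithm A: before step (1); running with current tree, active
   labeled node and list of par-nodes on which local jump was applied;
   halted (an output has been produced) *)
Inductive state :=
  | Start
  | Run of detree & nat & seq nat
  | Halted.

Inductive stepA (Th : pstruct) : state -> state -> Prop :=
  | st_undef :
      ~ (exists t, T_is Th t) -> stepA Th Start Halted
  | st_init t n :
      T_is Th t -> n \in map fst (labs t) -> stepA Th Start (Run t n [::])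
  | st_parelim t n J S m L :
      lab_lookup t n = Some S -> par_lookup t m = Some L ->
      has_edge t (n, None) (m, Some true) ->
      (false, L) \in S -> (true, L) \in S ->
      stepA Th (Run t n J)
        (Run (DT (labs t)
                 [seq p <- pnodes t | p.1 != m]
                 [seq rename_edge (m, Some false) (n, None) e
                 | e <- tedges t & ~~ incident (m, Some true) e])
             n J)
  | st_union t n J S k Sk :
      k != n -> lab_lookup t n = Some S -> lab_lookup t k = Some Sk ->
      has_edge t (n, None) (k, None) ->
      stepA Th (Run t n J)
        (Run (DT [seq (if p.1 == n then (n, S ++ Sk) else p)
                 | p <- labs t & p.1 != k]
                 (pnodes t)
                 [seq rename_edge (k, None) (n, None) e
                 | e <- tedges t & ~~ joins e (n, None) (k, None)])
             n J)
  | st_jump t n J S m L k Sk :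
      lab_lookup t n = Some S -> par_lookup t m = Some L ->
      has_edge t (n, None) (m, Some false) ->
      lab_lookup t k = Some Sk -> (true, L) \in Sk ->
      m \notin J ->
      stepA Th (Run t n J) (Run t k (m :: J))
  (* (4) local jump applied again to the same par-node: output no *)
  | st_jump_again t n J S m L k Sk :
      lab_lookup t n = Some S -> par_lookup t m = Some L ->
      has_edge t (n, None) (m, Some false) ->
      lab_lookup t k = Some Sk -> (true, L) \in Sk ->
      m \in J ->
      stepA Th (Run t n J) Halted.

(* Each rewriting rule makes the tree smaller or uses up a par-node:
   par-elimination deletes a par-node, union deletes a labeled node, and
   local jump marks a par-node, which by step (4) can happen only once per
   par-node. Hence the number of labeled nodes, plus the number of par-nodes,
   plus the number of unmarked par-nodes, decreases at every step after the
   initial one. *)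
From mathcomp Require Import all_boot.

Set Implicit Arguments.
Unset Strict Implicit.
Unset Printing Implicit Defensive.

Lemma count_sub_ltn (T : Type) (a b : pred T) (s : seq T) :
  subpred a b -> has (predD b a) s -> count a s < count b s.
Proof.
move=> sab; elim: s => //= x s IHs /orP [/andP [/negbTE -> bx] | hs].
  by rewrite bx add1n ltnS sub_count.
have [ax | _] := boolP (a x); first by rewrite (sab _ ax) ltn_add2l IHs.
by rewrite add0n (leq_trans (IHs hs)) ?leq_addl.
Qed.

Lemma size_filter_ltn (T : Type) (p : pred T) (s : seq T) :
  has (predC p) s -> size (filter p s) < size s.
Proof.
move=> hs; rewrite size_filter -count_predT count_sub_ltn //.
by rewrite (sub_has _ hs) // => x /= ->.
Qed.

Lemma lab_lookup_has t n S :
  lab_lookup t n = Some S -> has (fun p => p.1 == n) (labs t).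
Proof. by rewrite /lab_lookup -has_find; case: has. Qed.

Lemma par_lookup_has t m L :
  par_lookup t m = Some L -> has (fun p => p.1 == m) (pnodes t).
Proof. by rewrite /par_lookup -has_find; case: has. Qed.

Definition weightA (s : state) : nat :=
  if s is Run t _ J then
    (size (labs t) + size (pnodes t)
     + count (fun p : nat * nat => p.1 \notin J) (pnodes t)).+1
  else 0.

Lemma stepA_neq_Start Th s s' : stepA Th s s' -> s' <> Start.
Proof. by case. Qed.

Lemma stepA_weight Th s s' :
  stepA Th s s' -> s <> Start -> weightA s' < weightA s.
Proof.
case=> //= [t n J S m L _ /par_lookup_has hm _ _ _ _
           | t n J S k Sk _ _ /lab_lookup_has hk _ _
           | t n J S m L k Sk _ /par_lookup_has hm _ _ _ mJ _].
- rewrite ltnS -!addnA ltn_add2l -addSn leq_add //.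
    by rewrite size_filter_ltn // (sub_has _ hm) // => p /= ->.
  by rewrite count_filter sub_count // => p /andP [].
- rewrite ltnS size_map -!addnA ltn_add2r size_filter_ltn //.
  by rewrite (sub_has _ hk) // => p /= ->.
- rewrite ltnS ltn_add2l count_sub_ltn //.
    by move=> p /=; rewrite in_cons negb_or => /andP [].
  by rewrite (sub_has _ hm) // => p /= /eqP ->; rewrite /= in_cons eqxx.
Qed.

Lemma no_decreasing_nat_chain (f : nat -> nat) : ~ (forall k, f k.+1 < f k).
Proof.
move=> dec; suff bound k : f k + k <= f 0.
  by have := bound (f 0).+1; rewrite addnS ltnNge leq_addl.
elim: k => [|k IHk]; first by rewrite addn0.
by rewrite addnS (leq_trans _ IHk) // ltn_add2r dec.
Qed.

Theorem proposition3 :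
  forall Th : pstruct, is_pstruct Th ->
    ~ (exists run : nat -> state,
          run 0 = Start /\ forall k, stepA Th (run k) (run k.+1)).
Proof.
move=> Th _ [run [_ step]].
apply: (@no_decreasing_nat_chain (fun k => weightA (run k.+1))) => k.
exact: stepA_weight (step k.+1) (stepA_neq_Start (step k)).
Qed.
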